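(* For every $k\ge1$ there is a constant $C_k>0$ such that the following holds. Let $\tau\in\mathcal S_k$, $n\ge k$, let $\pi$ be a uniformly random permutation in $\mathcal S_n$, and let $X_{\tau,n}$ be the number of occurrences of $\tau$ in $\pi$. Then for every $t\ge\binom{n-1}{k-1}$, \[\Pr\big(|X_{\tau,n}-E[X_{\tau,n}]|>t\big)\le2\exp\Big(-\frac{t^2}{C_kn^{2k-1}}\Big).\]
   Context: $\mathcal S_n$ is the set of linear permutations $\pi=[\pi_1\ldots\pi_n]$ of $[n]$. An occurrence of a pattern $\tau\in\mathcal S_k$ in $\pi$ is a choice of indices $1\le i_1<\dots<i_k\le n$ such that for all $s,t$, $\pi_{i_s}<\pi_{i_t}$ if and only if $\tau_s<\tau_t$. *)

From mathcomp Require Import all_boot all_fingroup.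
From Stdlib Require Import Reals.
Set Implicit Arguments. Unset Strict Implicit. Unset Printing Implicit Defensive.

(* f : 'I_k -> 'I_n encodes indices i_1 < ... < i_k (0-based); pi : 'S_n maps
   position i to value pi i (0-based values; order is what matters). *)
Definition is_occ (k n : nat) (tau : 'S_k) (pi : 'S_n) (f : {ffun 'I_k -> 'I_n}) : bool :=
  [forall s : 'I_k, forall t : 'I_k,
     ((s < t)%N ==> (f s < f t)%N) && ((pi (f s) < pi (f t))%N == (tau s < tau t)%N)].

Definition occ (k n : nat) (tau : 'S_k) (pi : 'S_n) : nat :=
  #|[pred f : {ffun 'I_k -> 'I_n} | is_occ tau pi f]|.

Definition mean_occ (k n : nat) (tau : 'S_k) : R :=
  (INR (\sum_(pi : 'S_n) occ tau pi)%N / INR (n`!))%R.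

Definition Rltb (x y : R) : bool := if Rlt_dec x y then true else false.

Definition tail_prob (k n : nat) (tau : 'S_k) (t : R) : R :=
  (INR #|[pred pi : 'S_n | Rltb t (Rabs (INR (occ tau pi) - mean_occ n tau))]|
   / INR (n`!))%R.

(* The proof is the Azuma--McDiarmid argument for random permutations.
   - Combinatorics: exchanging two values of pi only affects occurrences that
     use one of the two positions carrying them, so X_{tau,n} changes by at most
     c = 2 k n^(k-1) (occ_tperm).
   - Analysis: from exp z <= 1 + z + 2 z^2 on [-1/2, 1/2] we get a Hoeffding-type
     bound for the exponential moments of a bounded family of mean zero
     (hoeffding_sum).
   - Martingale: revealing pi(0), pi(1), ... splits the permutations with a given
     prefix into classes of equal size (exchanging two values is a bijection
     between them) whose averages differ by at most c.  One step costs a factor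
     exp (2 s^2 c^2) (mgf_step, mgf_prefix_step), so n steps bound the
     exponential moment of h - E h by exp (2 n s^2 c^2) (mgf_prefix_class).
   - Chernoff: with s = t / (4 n c^2) this gives, for any h with bounded
     differences c and 0 <= t <= 2 n c,
       #{pi : |h pi - E h| > t} <= 2 n! exp (- t^2 / (8 n c^2))
     (perm_concentration).  For h = X_{tau,n}, 8 n c^2 = 32 k^2 n^(2k-1), and for
     t > 2 n c the tail is empty since 0 <= X_{tau,n} <= n^k.  The theorem holds
     with C_k = 32 k^2; the hypothesis t >= binomial (n-1) (k-1) is only used
     through t >= 0. *)
From Pilot Require Import Defs.
From Stdlib Require Import Reals.
From mathcomp Require Import all_boot all_order all_fingroup all_algebra.
From mathcomp Require Import Rstruct.
From mathcomp Require Import lra ring zify.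

Set Implicit Arguments.
Unset Strict Implicit.
Unset Printing Implicit Defensive.

Lemma card_ffun_fixed (k n : nat) (i : 'I_k) (p : 'I_n) :
  #|[pred f : {ffun 'I_k -> 'I_n} | f i == p]| = n ^ k.-1.
Proof.
pose F (x : 'I_k) := if x == i then pred1 p else predT.
have -> : #|[pred f : {ffun 'I_k -> 'I_n} | f i == p]| = #|family F|.
  apply: eq_card => f; rewrite !inE; apply/eqP/familyP => [fi x | Ff].
    by rewrite /F; case: eqP => [->|_]; rewrite inE ?fi.
  by have := Ff i; rewrite /F eqxx inE => /eqP.
rewrite card_family foldrE big_image /= (bigD1 i) //= /F eqxx card1 mul1n.
rewrite (eq_bigr (fun _ => n)); last by move=> x /negbTE ->; rewrite card_ord.
have -> : k.-1 = #|predC1 i| by rewrite cardC1 card_ord.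
by rewrite -prod_nat_const; apply: eq_bigl => x; rewrite !inE.
Qed.

(* Maps 'I_k -> 'I_n hitting a given two-element set of values: at most 2k n^(k-1)
   of them, by a union bound over the k arguments. *)
Lemma card_ffun_hitting (k n : nat) (p q : 'I_n) :
  #|[pred f : {ffun 'I_k -> 'I_n} | [exists i, (f i == p) || (f i == q)]]|
    <= 2 * k * n ^ k.-1.
Proof.
have card_eq i (v : 'I_n) :
    \sum_(f : {ffun 'I_k -> 'I_n}) (f i == v : nat) = n ^ k.-1.
  by rewrite -(card_ffun_fixed i v) -sum1_card [RHS]big_mkcond.
rewrite -sum1_card.
apply: (@leq_trans (\sum_(f : {ffun 'I_k -> 'I_n}) \sum_(i : 'I_k) ((f i == p) + (f i == q)))).
  rewrite big_mkcond /=; apply: leq_sum => f _; rewrite inE.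
  case: ifP => // /existsP[i hit]; rewrite (bigD1 i) //= (leq_trans _ (leq_addr _ _)) //.
  by case/orP: hit => /eqP ->; rewrite eqxx // addn1.
rewrite exchange_big (eq_bigr (fun _ => n ^ k.-1 + n ^ k.-1)) /=; last first.
  by move=> i _; rewrite big_split /= !card_eq.
rewrite sum_nat_const card_ord; lia.
Qed.

(* Exchanging the values a and b of pi (right multiplication by a transposition)
   does not affect occurrences avoiding the positions pi^-1 a and pi^-1 b. *)
Lemma is_occ_tperm (k n : nat) (tau : 'S_k) (pi : 'S_n) (a b : 'I_n)
    (f : {ffun 'I_k -> 'I_n}) :
  (forall i, (f i != (pi^-1)%g a) && (f i != (pi^-1)%g b)) ->
  is_occ tau (pi * tperm a b)%g f = is_occ tau pi f.
Proof.
move=> avoid; have fixed i : (pi * tperm a b)%g (f i) = pi (f i).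
  have /andP[fa fb] := avoid i.
  by rewrite permM tpermD // -(inj_eq (@perm_inj _ pi^-1)) permK eq_sym.
by apply: eq_forallb => s; apply: eq_forallb => t; rewrite !fixed.
Qed.

Lemma occ_tperm (k n : nat) (tau : 'S_k) (pi : 'S_n) (a b : 'I_n) :
  occ tau (pi * tperm a b)%g <= occ tau pi + 2 * k * n ^ k.-1 /\
  occ tau pi <= occ tau (pi * tperm a b)%g + 2 * k * n ^ k.-1.
Proof.
set hit := [pred f : {ffun 'I_k -> 'I_n} |
             [exists i, (f i == (pi^-1)%g a) || (f i == (pi^-1)%g b)]].
have hitT : #|hit| <= 2 * k * n ^ k.-1 by apply: card_ffun_hitting.
have split_occ (rho : 'S_n) : occ tau rho =
    #|[predI [pred f | is_occ tau rho f] & hit]| + #|[predD [pred f | is_occ tau rho f] & hit]|.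
  by rewrite cardID.
have hit_part (rho : 'S_n) : #|[predI [pred f | is_occ tau rho f] & hit]| <= #|hit|.
  by apply: subset_leq_card; apply/subsetP => f /andP[].
have same_rest : #|[predD [pred f | is_occ tau (pi * tperm a b)%g f] & hit]| =
                 #|[predD [pred f | is_occ tau pi f] & hit]|.
  apply: eq_card => f; rewrite !inE; case: (boolP [exists i, _]) => //=.
  by rewrite negb_exists => /forallP avoid; rewrite is_occ_tperm // => i; rewrite -negb_or.
have := split_occ (pi * tperm a b)%g; have := split_occ pi.
have := hit_part (pi * tperm a b)%g; have := hit_part pi.
lia.
Qed.

Lemma occ_le (k n : nat) (tau : 'S_k) (pi : 'S_n) : occ tau pi <= n ^ k.
Proof. by apply: leq_trans (max_card _) _; rewrite card_ffun !card_ord. Qed.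

Import Order.TTheory GRing.Theory Num.Theory.

Section Concentration.
Local Open Scope ring_scope.
#[local] Bind Scope ring_scope with R.
Arguments exp _%_ring_scope.

Lemma exp_gt0 (x : R) : 0 < exp x.
Proof. by apply/RltP; apply: exp_pos. Qed.

(* Rstruct's expRD and expR0 are stated with the Stdlib operations; these are
   the same facts with the ring operations. *)
Lemma expD (x y : R) : exp (x + y) = exp x * exp y.
Proof. exact/esym/expRD. Qed.

Lemma exp0 : exp 0 = 1.
Proof. exact: expR0. Qed.

Lemma exp_ge_add1 (x : R) : 1 + x <= exp x.
Proof. by apply/RleP; apply: exp_ineq1_le. Qed.

Lemma exp_ge1 (x : R) : 0 <= x -> 1 <= exp x.
Proof. by move=> x_ge0; apply: le_trans (exp_ge_add1 x); rewrite lerDl. Qed.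

(* A quadratic upper bound for exp near 0: from exp z * (1 - z) <= exp z * exp (-z) = 1. *)
Lemma exp_le_quadratic (z : R) : -(1/2) <= z -> z <= 1/2 -> exp z <= 1 + z + 2 * z ^+ 2.
Proof.
move=> zlo zhi.
have ez_1z : exp z * (1 - z) <= 1.
  have inv : exp z * exp (- z) = 1 by rewrite -expD subrr exp0.
  by rewrite -{2}inv ler_pM2l ?exp_gt0 //; have := exp_ge_add1 (- z); lra.
have quad_1z : 1 <= (1 + z + 2 * z ^+ 2) * (1 - z).
  have -> : (1 + z + 2 * z ^+ 2) * (1 - z) = 1 + z ^+ 2 * (1 - 2 * z) by ring.
  by rewrite lerDl mulr_ge0 ?sqr_ge0 //; lra.
have pos : 0 < 1 - z by lra.
by rewrite -(ler_pM2r pos) (le_trans ez_1z).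
Qed.

Lemma hoeffding_sum (I : finType) (V : {set I}) (y : I -> R) (c s : R) :
  0 <= s -> s * c <= 1/2 -> \sum_(a in V) y a = 0 ->
  (forall a, a \in V -> `|y a| <= c) ->
  \sum_(a in V) exp (s * y a) <= #|V|%:R * exp (2 * s ^+ 2 * c ^+ 2).
Proof.
move=> s0 sc sum0 ybound.
apply: (@le_trans _ _ (\sum_(a in V) (1 + s * y a + 2 * s ^+ 2 * c ^+ 2))).
  apply: ler_sum => a aV.
  have /andP[ylo yhi] : - c <= y a <= c by rewrite -ler_norml ybound.
  have sy_lo : - (s * c) <= s * y a by rewrite -mulrN ler_wpM2l.
  have sy_hi : s * y a <= s * c by rewrite ler_wpM2l.
  have y2 : y a ^+ 2 <= c ^+ 2.
    rewrite -subr_ge0 (_ : _ - _ = (c - y a) * (c + y a)); last by ring.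
    by apply: mulr_ge0; lra.
  apply: (le_trans (exp_le_quadratic (z := s * y a) _ _)); [lra | lra |].
  by rewrite lerD2l -mulrA ler_pM2l // exprMn ler_wpM2l ?sqr_ge0.
rewrite !big_split /= -mulr_sumr sum0 mulr0 addr0 !sumr_const -mulrnDl.
by rewrite -[_ *+ #|V|]mulr_natl ler_wpM2l ?ler0n ?exp_ge_add1.
Qed.

Lemma near_mean (J : finType) (V : {set J}) (x : J -> R) (m c : R) :
  m * #|V|%:R = \sum_(b in V) x b ->
  (forall a b, a \in V -> b \in V -> `|x a - x b| <= c) ->
  forall a, a \in V -> `|x a - m| <= c.
Proof.
move=> mean close a aV.
have V0 : 0 < #|V|%:R :> R by rewrite ltr0n card_gt0; apply/set0Pn; exists a.
have const (u : R) : u * #|V|%:R = \sum_(b in V) u by rewrite sumr_const mulr_natr.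
have lo : x a - c <= m.
  rewrite -(ler_pM2r V0) mean const; apply: ler_sum => b bV.
  by have := close a b aV bV; rewrite ler_norml => /andP[]; lra.
have hi : m <= x a + c.
  rewrite -(ler_pM2r V0) mean const; apply: ler_sum => b bV.
  by have := close a b aV bV; rewrite ler_norml => /andP[]; lra.
by rewrite ler_norml; apply/andP; split; lra.
Qed.

Lemma sum_subset_le (I : finType) (B A : {set I}) (F : I -> R) :
  B \subset A -> (forall p, p \in A -> 0 <= F p) ->
  \sum_(p in B) F p <= \sum_(p in A) F p.
Proof.
move=> /subsetP BA F_ge0; rewrite [X in X <= _]big_mkcond [X in _ <= X]big_mkcond.
apply: ler_sum => p _; case: ifP => [/BA -> // | _]; by case: ifP => // /F_ge0.
Qed.

Section FiberDecomposition.
Variables (T J : finType) (key : T -> J) (h : T -> R).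

(* Average of h over A, and the unnormalized exponential moment of h - avg h A. *)
Definition avg (A : {set T}) : R := (\sum_(p in A) h p) / #|A|%:R.
Definition mgf (s : R) (A : {set T}) : R := \sum_(p in A) exp (s * (h p - avg A)).

Definition fiber (A : {set T}) (a : J) : {set T} := [set p in A | key p == a].
Definition values (A : {set T}) : {set J} := [set a | fiber A a != set0].

Lemma in_fiber (A : {set T}) (a : J) (p : T) :
  (p \in fiber A a) = (p \in A) && (key p == a).
Proof. by rewrite inE. Qed.

Lemma avg_mul (A : {set T}) : A != set0 -> avg A * #|A|%:R = \sum_(p in A) h p.
Proof. by move=> A0; rewrite /avg mulfVK // pnatr_eq0 cards_eq0. Qed.

Lemma sum_fibers (A : {set T}) (F : T -> R) :
  \sum_(p in A) F p = \sum_(a in values A) \sum_(p in fiber A a) F p.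
Proof.
rewrite (partition_big key predT) //= (bigID [in values A]) /=.
rewrite [X in _ + X]big1 ?addr0 => [|a]; last first.
  rewrite inE negbK => /eqP A0; rewrite big1 // => p /andP[pA /eqP kp].
  have : p \in fiber A a by rewrite inE pA kp eqxx.
  by rewrite A0 inE.
by apply: eq_bigr => a _; apply: eq_bigl => p; rewrite inE.
Qed.

Lemma equal_fibers (A : {set T}) (m : nat) : A != set0 ->
  (forall a, a \in values A -> #|fiber A a| = m) ->
  #|A|%:R = #|values A|%:R * m%:R :> R /\
  avg A * #|A|%:R = m%:R * \sum_(a in values A) avg (fiber A a).
Proof.
move=> A0 sizeA; split.
  have -> : #|A|%:R = \sum_(p in A) (1 : R) by rewrite sumr_const.
  rewrite sum_fibers (eq_bigr (fun _ => m%:R)) => [|a aA]; last by rewrite sumr_const sizeA.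
  by rewrite sumr_const mulr_natl.
rewrite avg_mul // sum_fibers mulr_sumr; apply: eq_bigr => a aA.
by rewrite -(sizeA a aA) mulrC avg_mul //; move: aA; rewrite inE.
Qed.

Lemma mgf_set1 (s : R) (p : T) : mgf s [set p] = 1.
Proof. by rewrite /mgf /avg !big_set1 cards1 divr1 subrr mulr0 exp0. Qed.

Lemma exp_markov (s t : R) (A : {set T}) : 0 <= s ->
  #|[set p in A | avg A + t < h p]|%:R <= mgf s A * exp (- (s * t)).
Proof.
move=> s_ge0; rewrite -sumr_const /mgf mulr_suml.
apply: (@le_trans _ _ (\sum_(p in [set p in A | avg A + t < h p])
                          exp (s * (h p - avg A)) * exp (- (s * t)))).
  apply: ler_sum => p; rewrite inE => /andP[_ big_h]; rewrite -expD.
  apply: le_trans (exp_ge_add1 _); rewrite lerDl -mulrBr mulr_ge0 //; lra.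
apply: sum_subset_le => [|p _]; first by apply/subsetP => p; rewrite inE => /andP[].
by rewrite mulr_ge0 // ltW ?exp_gt0.
Qed.

Section OneStep.
Variables (s c : R).
Hypotheses (s_ge0 : 0 <= s) (sc_small : s * c <= 1/2).

Lemma mgf_step (A : {set T}) (B : R) :
  0 <= B ->
  (forall a b, a \in values A -> b \in values A -> #|fiber A a| = #|fiber A b|) ->
  (forall a b, a \in values A -> b \in values A ->
     `|avg (fiber A a) - avg (fiber A b)| <= c) ->
  (forall a, a \in values A -> mgf s (fiber A a) <= #|fiber A a|%:R * B) ->
  mgf s A <= #|A|%:R * B * exp (2 * s ^+ 2 * c ^+ 2).
Proof.
move=> B_ge0 same_size close fiber_bound.
have [->|A0] := eqVneq A set0; first by rewrite /mgf big_set0 cards0 !mul0r.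
have /set0Pn[p0 p0A] := A0; set V := values A; set m := #|fiber A (key p0)|.
have p0_fiber : p0 \in fiber A (key p0) by rewrite in_fiber p0A eqxx.
have p0V : key p0 \in V by rewrite inE; apply/set0Pn; exists p0.
have sizeA a : a \in V -> #|fiber A a| = m by move=> aV; apply: same_size.
have m_gt0 : 0 < m%:R :> R by rewrite ltr0n card_gt0; apply/set0Pn; exists p0.
have [cardA avgA] := @equal_fibers A m A0 sizeA.
have mean : avg A * #|V|%:R = \sum_(a in V) avg (fiber A a).
  apply: (mulIf (lt0r_neq0 m_gt0)); rewrite -mulrA -cardA avgA; ring.
have decompose : mgf s A =
    \sum_(a in V) exp (s * (avg (fiber A a) - avg A)) * mgf s (fiber A a).
  rewrite /mgf sum_fibers; apply: eq_bigr => a _; rewrite mulr_sumr.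
  by apply: eq_bigr => p _; rewrite -expD; congr exp; ring.
rewrite decompose.
apply: (@le_trans _ _ (\sum_(a in V) exp (s * (avg (fiber A a) - avg A)) * (m%:R * B))).
  apply: ler_sum => a aV; rewrite ler_wpM2l ?(ltW (exp_gt0 _)) //.
  by rewrite -(sizeA a aV) fiber_bound.
have -> : #|A|%:R * B * exp (2 * s ^+ 2 * c ^+ 2) =
    #|V|%:R * exp (2 * s ^+ 2 * c ^+ 2) * (m%:R * B) by rewrite cardA; ring.
rewrite -mulr_suml ler_wpM2r ?mulr_ge0 ?ler0n //.
apply: hoeffding_sum => // [|a aV].
  by rewrite sumrB sumr_const -mean mulr_natr subrr.
exact: (@near_mean _ V (fun a => avg (fiber A a)) _ c mean close a aV).
Qed.
End OneStep.
End FiberDecomposition.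

Section PrefixMartingale.
Variables (n : nat) (h : 'S_n -> R) (s c : R).
Hypotheses (s_ge0 : 0 <= s) (sc_small : s * c <= 1/2).
Hypothesis bounded_diff : forall (p : 'S_n) (a b : 'I_n), `|h (p * tperm a b)%g - h p| <= c.

(* The permutations agreeing with p0 on the positions 0, ..., j-1; revealing
   p 0, p 1, ... one at a time refines these classes (a Doob martingale). *)
Definition prefix_class (j : nat) (p0 : 'S_n) : {set 'S_n} :=
  [set p : 'S_n | [forall i : 'I_n, (i < j)%N ==> (p i == p0 i)]].

Lemma prefix_classP (j : nat) (p0 p : 'S_n) :
  reflect (forall i : 'I_n, (i < j)%N -> p i = p0 i) (p \in prefix_class j p0).
Proof.
rewrite inE; apply: (iffP forallP) => [agree i ij | agree i].
  by have := agree i; rewrite ij => /eqP.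
by apply/implyP => /agree ->.
Qed.

Lemma prefix_class_full (j : nat) (p0 : 'S_n) : (n <= j)%N -> prefix_class j p0 = [set p0].
Proof.
move=> nj; apply/setP => p; rewrite in_set1; apply/prefix_classP/eqP => [agree | -> //].
by apply/permP => i; apply: agree; apply: leq_trans (ltn_ord i) nj.
Qed.

Section RevealOneValue.
Variables (j : nat) (p0 : 'S_n).
Hypothesis lt_jn : (j < n)%N.
Let pos : 'I_n := Ordinal lt_jn.
Let A := prefix_class j p0.
Let value (p : 'S_n) := p pos.

Lemma fiber_prefix (p1 : 'S_n) : p1 \in A -> fiber value A (p1 pos) = prefix_class j.+1 p1.
Proof.
move=> /prefix_classP p1A; apply/setP => p; rewrite in_fiber; apply/andP/prefix_classP.
  move=> [/prefix_classP pA /eqP pj] i; rewrite ltnS leq_eqVlt => /orP[/eqP ij | ij].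
    by rewrite (_ : i = pos) //; apply: val_inj.
  by rewrite pA // p1A.
move=> agree; split; last by apply/eqP; apply: agree.
by apply/prefix_classP => i ij; rewrite agree ?p1A //; apply: ltnW.
Qed.

Lemma values_prefix (a : 'I_n) : a \in values value A -> exists2 pa, pa \in A & a = pa pos.
Proof. by rewrite inE => /set0Pn[pa]; rewrite in_fiber => /andP[paA /eqP <-]; exists pa. Qed.

Lemma prefix_value_fresh (q : 'S_n) (i : 'I_n) : q \in A -> (i < j)%N -> p0 i != q pos.
Proof.
by move=> /prefix_classP qA ij; rewrite -(qA i ij) (inj_eq perm_inj) -val_eqE neq_ltn ij.
Qed.

Lemma swap_fiber (pa pb p : 'S_n) : pa \in A -> pb \in A ->
  ((p * tperm (pa pos) (pb pos))%g \in fiber value A (pb pos)) = (p \in fiber value A (pa pos)).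
Proof.
have into q1 q2 r : q1 \in A -> q2 \in A -> r \in fiber value A (q1 pos) ->
    (r * tperm (q1 pos) (q2 pos))%g \in fiber value A (q2 pos).
  move=> q1A q2A; rewrite !in_fiber /value => /andP[/prefix_classP rA /eqP rj].
  rewrite permM rj tpermL eqxx andbT; apply/prefix_classP => i ij.
  by rewrite permM rA // tpermD // eq_sym prefix_value_fresh.
move=> paA pbA; apply/idP/idP; last exact: into.
by move=> /(into _ _ _ pbA paA); rewrite -mulgA [tperm (pb pos) _]tpermC tperm2 mulg1.
Qed.

Lemma sum_swap_fiber (pa pb : 'S_n) (F : 'S_n -> R) : pa \in A -> pb \in A ->
  \sum_(p in fiber value A (pb pos)) F p =
  \sum_(p in fiber value A (pa pos)) F (p * tperm (pa pos) (pb pos))%g.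
Proof.
move=> paA pbA; rewrite (reindex_inj (mulIg (tperm (pa pos) (pb pos)))) /=.
by apply: eq_bigl => p; apply: swap_fiber.
Qed.

Lemma card_fiber_swap (pa pb : 'S_n) : pa \in A -> pb \in A ->
  #|fiber value A (pa pos)| = #|fiber value A (pb pos)|.
Proof.
move=> paA pbA; apply/eqP; rewrite -(eqr_nat R) -!sumr_const.
by rewrite (sum_swap_fiber (fun=> 1) paA pbA).
Qed.

Lemma avg_fiber_swap (pa pb : 'S_n) : pa \in A -> pb \in A ->
  `|avg h (fiber value A (pa pos)) - avg h (fiber value A (pb pos))| <= c.
Proof.
move=> paA pbA; set Fa := fiber value A (pa pos); set Fb := fiber value A (pb pos).
have Fa0 : Fa != set0 by apply/set0Pn; exists pa; rewrite in_fiber paA eqxx.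
have m_gt0 : 0 < #|Fa|%:R :> R by rewrite ltr0n card_gt0.
have diff : (avg h Fa - avg h Fb) * #|Fa|%:R =
    \sum_(p in Fa) (h p - h (p * tperm (pa pos) (pb pos))%g).
  rewrite mulrBl avg_mul // (card_fiber_swap paA pbA) avg_mul; last first.
    by apply/set0Pn; exists pb; rewrite in_fiber pbA eqxx.
  by rewrite (sum_swap_fiber h paA pbA) sumrB.
rewrite -(ler_pM2r m_gt0) -{1}(gtr0_norm m_gt0) -normrM diff.
apply: le_trans (ler_norm_sum _ _ _) _; rewrite mulr_natr -sumr_const.
by apply: ler_sum => p _; rewrite distrC bounded_diff.
Qed.

Lemma mgf_prefix_step (B : R) : 0 <= B ->
  (forall p1, p1 \in A ->
     mgf h s (prefix_class j.+1 p1) <= #|prefix_class j.+1 p1|%:R * B) ->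
  mgf h s A <= #|A|%:R * B * exp (2 * s ^+ 2 * c ^+ 2).
Proof.
move=> B_ge0 next; apply: (mgf_step (key := value) s_ge0 sc_small) => // [a b|a b|a].
- by move=> /values_prefix[pa paA ->] /values_prefix[pb pbA ->]; apply: card_fiber_swap.
- by move=> /values_prefix[pa paA ->] /values_prefix[pb pbA ->]; apply: avg_fiber_swap.
- by move=> /values_prefix[pa paA ->]; rewrite fiber_prefix // next.
Qed.
End RevealOneValue.

Lemma mgf_prefix_class (d j : nat) (p0 : 'S_n) : (n <= j + d)%N ->
  mgf h s (prefix_class j p0) <=
  #|prefix_class j p0|%:R * exp (2 * d%:R * s ^+ 2 * c ^+ 2).
Proof.
have revealed d' j' p : (n <= j')%N ->
    mgf h s (prefix_class j' p) <= #|prefix_class j' p|%:R * exp (2 * d'%:R * s ^+ 2 * c ^+ 2).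
  move=> le_nj; rewrite prefix_class_full // mgf_set1 cards1 mul1r; apply: exp_ge1.
  by apply: mulr_ge0 (sqr_ge0 _); apply: mulr_ge0 (sqr_ge0 _); apply: mulr_ge0.
elim: d j p0 => [|d IH] j p0 le_n_jd; have [le_nj | lt_jn] := leqP n j; try exact: revealed.
  by move: lt_jn; rewrite ltnNge -(addn0 j) le_n_jd.
have -> : 2 * d.+1%:R * s ^+ 2 * c ^+ 2 = 2 * d%:R * s ^+ 2 * c ^+ 2 + 2 * s ^+ 2 * c ^+ 2.
  by rewrite -addn1 natrD; ring.
rewrite expD mulrA; apply: (mgf_prefix_step lt_jn) => [|p1 _]; first exact: ltW (exp_gt0 _).
by apply: IH; rewrite addSn -addnS.
Qed.

Lemma upper_tail_count (t : R) :
  #|[set p | avg h [set: 'S_n] + t < h p]|%:R <=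
  n`!%:R * exp (2 * n%:R * s ^+ 2 * c ^+ 2 - s * t).
Proof.
have whole : prefix_class 0 1 = [set: 'S_n].
  by apply/setP => p; rewrite in_setT; apply/prefix_classP.
have := exp_markov h t [set: 'S_n] s_ge0.
have -> : [set p in [set: 'S_n] | avg h [set: 'S_n] + t < h p] =
          [set p | avg h [set: 'S_n] + t < h p] by apply/setP => p; rewrite !inE.
move/le_trans; apply; rewrite expD mulrA (ler_wpM2r (ltW (exp_gt0 _))) //.
by have := @mgf_prefix_class n 0 1 (leqnn n); rewrite whole cardsT card_Sn.
Qed.
End PrefixMartingale.

Lemma avg_opp (T : finType) (h : T -> R) (A : {set T}) :
  avg (fun p => - h p) A = - avg h A.
Proof. by rewrite /avg sumrN mulNr. Qed.

Lemma perm_concentration (n : nat) (h : 'S_n -> R) (c t : R) :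
  (0 < n)%N -> 0 < c ->
  (forall (p : 'S_n) (a b : 'I_n), `|h (p * tperm a b)%g - h p| <= c) ->
  0 <= t -> t <= 2 * n%:R * c ->
  #|[set p | t < `|h p - avg h [set: 'S_n]|]|%:R <=
  2 * n`!%:R * exp (- t ^+ 2 / (8 * n%:R * c ^+ 2)).
Proof.
move=> n_gt0 c_gt0 bdiff t_ge0 t_le; set mu := avg h [set: 'S_n].
have N_gt0 : 0 < n%:R :> R by rewrite ltr0n.
pose s := t / (4 * n%:R * c ^+ 2).
have nc_gt0 : 0 < 4 * n%:R * c by apply: mulr_gt0 => //; apply: mulr_gt0.
have s_ge0 : 0 <= s by apply: divr_ge0 => //; rewrite expr2 mulrA; apply/ltW/mulr_gt0.
have sc_small : s * c <= 1/2.
  have -> : s * c = t / (4 * n%:R * c) by rewrite /s; field; rewrite !gt_eqF.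
  by rewrite ler_pdivrMr //; lra.
have exponent : 2 * n%:R * s ^+ 2 * c ^+ 2 - s * t = - t ^+ 2 / (8 * n%:R * c ^+ 2).
  by rewrite /s; field; rewrite !gt_eqF.
have bdiff_opp p a b : `|(- h (p * tperm a b)%g) - (- h p)| <= c.
  by rewrite -opprD normrN bdiff.
have upper := upper_tail_count s_ge0 sc_small bdiff t.
have lower := upper_tail_count s_ge0 sc_small bdiff_opp t.
rewrite avg_opp -/mu exponent in lower; rewrite -/mu exponent in upper.
apply: le_trans (_ : _ <= #|[set p | mu + t < h p]|%:R + #|[set p | - mu + t < - h p]|%:R) _.
  rewrite -natrD ler_nat; apply: leq_trans (leq_card_setU _ _).1.
  apply/subset_leq_card/subsetP => p; rewrite !inE ltr_normr => /orP[] ?.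
  - by apply/orP; left; lra.
  - by apply/orP; right; lra.
by have := lerD upper lower; lra.
Qed.

Lemma dev_le_range (T : finType) (h : T -> R) (A : {set T}) (M : R) (p : T) :
  (forall q, 0 <= h q <= M) -> p \in A -> `|h p - avg h A| <= M.
Proof.
move=> range pA; have A0 : A != set0 by apply/set0Pn; exists p.
apply: (near_mean (avg_mul h A0)) pA => a b _ _.
by have := range a; have := range b; rewrite ler_norml => /andP[? ?] /andP[? ?]; lra.
Qed.

Definition occR (k n : nat) (tau : 'S_k) (p : 'S_n) : R := (occ tau p)%:R.

Lemma occR_bounded_diff (k n : nat) (tau : 'S_k) (p : 'S_n) (a b : 'I_n) :
  `|occR tau (p * tperm a b)%g - occR tau p| <= (2 * k * n ^ k.-1)%:R.
Proof.
have [up down] := occ_tperm tau p a b; rewrite /occR.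
rewrite -(ler_nat R) natrD in up; rewrite -(ler_nat R) natrD in down.
by rewrite ler_norml; apply/andP; split; lra.
Qed.

(* The concentration inequality for X_{tau,n}, counting permutations; the case
   t > 2 n c is trivial since then t exceeds the range n^k of X_{tau,n}. *)
Lemma occ_tail_count (k n : nat) (tau : 'S_k) (t : R) :
  (0 < k)%N -> (k <= n)%N -> 0 <= t ->
  #|[set p : 'S_n | t < `|occR tau p - avg (occR tau) [set: 'S_n]|]|%:R <=
  2 * n`!%:R * exp (- t ^+ 2 / ((32 * k * k)%:R * n%:R ^+ (2 * k - 1))).
Proof.
move=> k_gt0 le_kn t_ge0; have n_gt0 : (0 < n)%N by apply: leq_trans le_kn.
set c := (2 * k * n ^ k.-1)%N.
have exponent : 8 * n%:R * c%:R ^+ 2 = (32 * k * k)%:R * n%:R ^+ (2 * k - 1) :> R.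
  have -> : (2 * k - 1 = (k.-1 * 2).+1)%N by lia.
  by rewrite /c !natrM natrX [n%:R ^+ _.+1]exprS exprM; ring.
rewrite -exponent; have [t_small | t_big] := lerP t (2 * n%:R * c%:R).
  apply: perm_concentration => //; last exact: occR_bounded_diff.
  by rewrite ltr0n !muln_gt0 k_gt0 expn_gt0 n_gt0.
have range (p : 'S_n) : 0 <= occR tau p <= (n ^ k)%:R by rewrite ler0n ler_nat occ_le.
have range_lt_t : (n ^ k)%:R < t.
  apply: le_lt_trans t_big; rewrite -[2]/(2%:R) -!natrM ler_nat.
  by rewrite /c -(prednK k_gt0) expnS /=; nia.
have -> : [set p : 'S_n | t < `|occR tau p - avg (occR tau) [set: 'S_n]|] = set0.
  apply/setP => p; rewrite !inE; apply/negbTE; rewrite -leNgt.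
  by apply: le_trans (dev_le_range _ _) (ltW range_lt_t) => //; rewrite in_setT.
rewrite cards0; apply: mulr_ge0; last exact: ltW (exp_gt0 _).
by apply: mulr_ge0; [lra | exact: ler0n].
Qed.

Lemma RltbE (x y : R) : Defs.Rltb x y = (x < y).
Proof.
rewrite /Defs.Rltb; case: Rlt_dec => [/RltP -> // | not_lt].
by apply/esym/negbTE/RltP.
Qed.

Lemma mean_occE (k n : nat) (tau : 'S_k) : mean_occ n tau = avg (occR tau) [set: 'S_n].
Proof.
rewrite /mean_occ /avg !INRE natr_sum RdivE cardsT card_Sn.
by congr (_ / _); apply: eq_bigl => p; rewrite in_setT.
Qed.

Lemma tail_probE (k n : nat) (tau : 'S_k) (t : R) :
  tail_prob n tau t =
  #|[set p : 'S_n | t < `|occR tau p - avg (occR tau) [set: 'S_n]|]|%:R / n`!%:R.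
Proof.
rewrite /tail_prob RdivE !INRE; congr (_%:R / _).
by apply: eq_card => p; rewrite !inE RltbE mean_occE RabsE INRE.
Qed.

Lemma tail_prob_le (k n : nat) (tau : 'S_k) (t : R) :
  (0 < k)%N -> (k <= n)%N -> 0 <= t ->
  tail_prob n tau t <= 2 * exp (- t ^+ 2 / ((32 * k * k)%:R * n%:R ^+ (2 * k - 1))).
Proof.
move=> k_gt0 le_kn t_ge0.
by rewrite tail_probE ler_pdivrMr ?ltr0n ?fact_gt0 // mulrAC occ_tail_count.
Qed.
End Concentration.

(* As in the statement of the theorem, %R refers to Stdlib's scope of reals. *)
Delimit Scope R_scope with R.

Theorem mainTheorem12 :
  forall k : nat, (1 <= k)%N ->
  exists C : R, (0 < C)%R /\
    forall (tau : 'S_k) (n : nat), (k <= n)%N ->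
    forall t : R, (INR 'C(n.-1, k.-1) <= t)%R ->
      (tail_prob n tau t <= 2 * exp (- (t ^ 2) / (C * INR n ^ (2 * k - 1))))%R.
Proof.
move=> k k_gt0; exists (INR (32 * k * k)); split; first by apply: lt_0_INR; lia.
move=> tau n le_kn t t_ge_binom.
have t_ge0 : (0 <= t)%R := Rle_trans _ _ _ (pos_INR _) t_ge_binom.
apply/RleP; rewrite RmultE RdivE RoppE RmultE !RpowE !INRE IZRposE INRE.
by apply: tail_prob_le => //; apply/RleP.
Qed.
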